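(* Let $\Lambda$ be a countable index set, $\overline{a},\overline{r}$ sequences of positive reals indexed by $\Lambda$, let $0<t<p\le 2$ and $x\in\mathbb{R}^\Lambda$. Then $x\in k_t$ if and only if \[\gamma(x):=\sup_{\alpha>0}\alpha^{\frac{t-p}{p}}\|x-T_\alpha(x)\|_{\overline{\omega}_p,p}<\infty.\] More precisely, \[\gamma(x)\le 2\left(2^{p-t}-1\right)^{-1/p}\|x\|_{k_t}^{t/p}\quad\text{and}\quad \|x\|_{k_t}\le 2^{p/t}(2^t-1)^{-1/t}\gamma(x)^{p/t}.\]
   Context: For a sequence $\omega$ of positive reals and $p\in(0,\infty)$, $\|x\|_{\omega,p}=\left(\sum_{j\in\Lambda}\omega_j^p|x_j|^p\right)^{1/p}$ (possibly $+\infty$) and $\ell^p_\omega=\{x:\|x\|_{\omega,p}<\infty\}$. For $s\in(0,2]$, $(\overline{\omega}_s)_j=(\overline{a}_j^{2s-2}\overline{r}_j^{2-s})^{1/s}$. For $t\in(0,2)$, $k_t=\{x\in\mathbb{R}^\Lambda:\|x\|_{k_t}<\infty\}$ where $\|x\|_{k_t}=\sup_{\alpha>0}\alpha\left(\sum_{j\in\Lambda}\overline{a}_j^{-2}\overline{r}_j^2\mathbf{1}_{\{\overline{a}_j^{-2}\overline{r}_j\alpha<|x_j|\}}\right)^{1/t}$. For $\alpha>0$ the thresholding map $T_\alpha:\mathbb{R}^\Lambda\to\mathbb{R}^\Lambda$ is $T_\alpha(x)_j=x_j$ if $\overline{a}_j^{-2}\overline{r}_j\alpha<|x_j|$ and $T_\alpha(x)_j=0$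 otherwise. *)

From HB Require Import structures.
From mathcomp Require Import all_boot all_order all_algebra.
From mathcomp Require Import all_classical all_reals all_analysis.
Set Implicit Arguments. Unset Strict Implicit. Unset Printing Implicit Defensive.
Import Order.TTheory GRing.Theory Num.Theory.
Local Open Scope classical_set_scope.
Local Open Scope ring_scope.

Definition wnorm (I : countType) (R : realType) (omega : I -> R) (p : R)
  (x : I -> R) : \bar R :=
  ((\esum_(j in [set: I]) ((omega j `^ p) * (`|x j| `^ p))%:E) `^ p^-1)%E.

Definition omega_bar (I : countType) (R : realType) (a r : I -> R) (s : R)
  : I -> R :=
  fun j => (a j `^ (2 * s - 2) * r j `^ (2 - s)) `^ s^-1.

Definition above (I : countType) (R : realType) (a r : I -> R) (alpha : R)
  (x : I -> R) (j : I) : bool :=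
  (a j)^-2 * r j * alpha < `|x j|.

Definition kt_norm (I : countType) (R : realType) (a r : I -> R) (t : R)
  (x : I -> R) : \bar R :=
  ereal_sup [set (alpha%:E *
     ((\esum_(j in [set j | above a r alpha x j]) ((a j)^-2 * r j ^+ 2)%:E)
        `^ t^-1))%E | alpha in [set alpha : R | 0 < alpha]].

Definition kt (I : countType) (R : realType) (a r : I -> R) (t : R)
  : set (I -> R) := [set x | (kt_norm a r t x < +oo)%E].

Definition thresh (I : countType) (R : realType) (a r : I -> R) (alpha : R)
  (x : I -> R) : I -> R :=
  fun j => if above a r alpha x j then x j else 0.

Definition gamma_fun (I : countType) (R : realType) (a r : I -> R) (t p : R)
  (x : I -> R) : \bar R :=
  ereal_sup [set ((alpha `^ ((t - p) / p))%:E *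
     wnorm (omega_bar a r p) p (fun j => (x j - thresh a r alpha x j)%R))%E
   | alpha in [set alpha : R | 0 < alpha]].

From HB Require Import structures.
From mathcomp Require Import all_boot all_order all_algebra.
From mathcomp Require Import all_classical all_reals all_analysis.
From mathcomp Require Import ring.
Set Implicit Arguments.
Unset Strict Implicit.
Unset Printing Implicit Defensive.
Import Order.TTheory GRing.Theory Num.Theory.
Local Open Scope classical_set_scope.
Local Open Scope ring_scope.

(* Put y_j = |x_j| / (a_j^-2 r_j) and mu_j = a_j^-2 r_j^2.  Then ||x||_{k_t} is
   the weak-L^t quasi-norm sup_s s mu(y > s)^(1/t) of y with respect to the
   weights mu, and ||x - T_s x||^p_{omega_p,p} is the truncated moment
   sum_{y_j <= s} mu_j y_j^p.  Both inequalities come from slicing the range of y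
   into dyadic shells (b 2^n, b 2^(n+1)]: on each shell y^p is comparable to
   (b 2^n)^p, so a truncated moment is bounded by a geometric series (ratio
   2^(p-t)) of tail masses and, conversely, a tail mass by a geometric series
   (ratio 2^(-t)) of truncated moments.  It suffices to bound finite partial
   sums, since a sum over a countable set is the supremum of its finite sums;
   for finitely many indices, finitely many shells cover all the nonzero y_j. *)

Section dyadic.
Variable R : realType.
Implicit Types (b c d e f m p q r s t y : R).

Lemma powR_gt1 c r : 1 < c -> 0 < r -> 1 < c `^ r.
Proof.
move=> c1 r0; rewrite /powR gt_eqF ?(lt_trans ltr01)// expR_gt1.
by rewrite mulr_gt0// ln_gt0.
Qed.

Lemma powR_invr c r : 0 <= c -> c^-1 `^ r = c `^ (- r).
Proof. by move=> c0; rewrite -powR_inv1// -powRrM mulN1r. Qed.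

Lemma powR_mul_exp2 c r n : 0 <= c -> (c * 2 ^+ n) `^ r = c `^ r * (2 `^ r) ^+ n.
Proof.
move=> c0; rewrite powRM ?exprn_ge0// -powR_mulrn// -powRrM (mulrC n%:R).
by rewrite powRrM powR_mulrn ?powR_ge0.
Qed.

Lemma powRBD c r s : 0 < c -> c `^ (r - s) = c `^ r * c `^ (- s).
Proof. by move=> c0; rewrite powRD//; apply/implyP => _; rewrite gt_eqF. Qed.

Lemma powR_div_root c d q r : 0 <= c -> 0 <= d ->
  (c `^ q / d) `^ r^-1 = c `^ (q / r) * d `^ (- r^-1).
Proof.
move=> c0 d0; rewrite powRM ?powR_ge0 ?invr_ge0// -powRrM powR_invr//.
Qed.

Lemma powR_scale_free s c e f r : 0 < s -> 0 <= c -> r != 0 -> f * r = - e ->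
  s `^ f * (c * s `^ e) `^ r^-1 = c `^ r^-1.
Proof.
move=> s0 c0 r0 fr; rewrite powRM ?powR_ge0// -powRrM mulrCA -powRD; last first.
  by apply/implyP => _; rewrite gt_eqF.
have -> : e = - (f * r) by rewrite fr opprK.
by rewrite mulNr mulfK// subrr powRr0 mulr1.
Qed.

Lemma dyadic_shell b y N : 0 < b -> b < y -> y <= b * 2 ^+ N ->
  exists2 n, (n < N)%N & b * 2 ^+ n < y <= b * 2 ^+ n.+1.
Proof.
elim: N b => [|N IH] b b0 b_lt_y yb.
  by move: yb; rewrite expr0 mulr1 leNgt b_lt_y.
have [y2b|b2y] := leP y (b * 2).
  by exists 0%N => //; rewrite expr0 expr1 mulr1 b_lt_y.
have b2_gt0 : 0 < b * 2 by rewrite mulr_gt0.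
have yb2 : y <= b * 2 * 2 ^+ N by rewrite -mulrA -exprS.
have [n nN shell] := IH _ b2_gt0 b2y yb2.
by exists n.+1 => //; move: shell; rewrite -!mulrA -!exprS.
Qed.

Lemma ler_sum_term (F : nat -> R) N n : (forall i, 0 <= F i) -> (n < N)%N ->
  F n <= \sum_(i < N) F i.
Proof. by move=> F0 nN; rewrite (bigD1 (Ordinal nN))//= lerDl sumr_ge0. Qed.

Lemma lower_term_le_dyadic b m y p N : 0 < b -> 0 <= m -> 0 < p -> 0 <= y ->
  (0 < y -> b < y) ->
  (if b * 2 ^+ N < y then 0 else m * y `^ p) <=
  \sum_(n < N) (b * 2 ^+ n.+1) `^ p * (if b * 2 ^+ n < y then m else 0).
Proof.
move=> b0 m0 p0 y0 b_lt_y.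
have F0 n : 0 <= (b * 2 ^+ n.+1) `^ p * (if b * 2 ^+ n < y then m else 0).
  by rewrite mulr_ge0 ?powR_ge0//; case: ifP.
case: ifPn => [_|]; first by apply: sumr_ge0 => i _; exact: F0.
rewrite -leNgt => yN; have [y_gt0|] := ltP 0 y; last first.
  move=> y_le0; have y_eq0 : y = 0 by apply/le_anti; rewrite y_le0 y0.
  by rewrite {1}y_eq0 powR0 ?gt_eqF// mulr0; apply: sumr_ge0 => i _; exact: F0.
have [n nN /andP[lo hi]] := dyadic_shell b0 (b_lt_y y_gt0) yN.
apply: le_trans (ler_sum_term F0 nN); rewrite lo mulrC ler_wpM2r//.
by apply: ge0_ler_powR; rewrite ?nnegrE ?(ltW p0) ?mulr_ge0 ?exprn_ge0 ?(ltW b0).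
Qed.

Lemma tail_term_le_dyadic b m y p N : 0 < b -> 0 <= m -> 0 <= p ->
  y <= b * 2 ^+ N ->
  (if b < y then m else 0) <=
  \sum_(n < N) ((b * 2 ^+ n) `^ p)^-1 * (if b * 2 ^+ n.+1 < y then 0 else m * y `^ p).
Proof.
move=> b0 m0 p0 yN.
have F0 n : 0 <= ((b * 2 ^+ n) `^ p)^-1 *
    (if b * 2 ^+ n.+1 < y then 0 else m * y `^ p).
  by rewrite mulr_ge0 ?invr_ge0 ?powR_ge0//; case: ifP; rewrite ?mulr_ge0 ?powR_ge0.
case: ifPn => [b_lt_y|_]; last by apply: sumr_ge0 => i _; exact: F0.
have [n nN /andP[lo hi]] := dyadic_shell b0 b_lt_y yN.
have bn0 : 0 < b * 2 ^+ n by rewrite mulr_gt0 ?exprn_gt0.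
apply: le_trans (ler_sum_term F0 nN); rewrite ltNge hi /=.
rewrite mulrCA -[leLHS]mulr1 ler_wpM2l// ler_pdivlMl ?powR_gt0// mulr1.
apply: ge0_ler_powR (ltW lo) => //; rewrite nnegrE ltW//.
exact: lt_trans bn0 lo.
Qed.

Lemma dyadic_lower_termE b c p t n : 0 < b ->
  (b * 2 ^+ n.+1) `^ p * (c * (b * 2 ^+ n) `^ (- t)) =
  2 `^ p * c * b `^ (p - t) * (2 `^ (p - t)) ^+ n.
Proof.
move=> b0; rewrite !powR_mul_exp2 ?(ltW b0)// !powRBD// exprS exprMn.
ring.
Qed.

Lemma dyadic_tail_termE b d p t n : 0 < b ->
  ((b * 2 ^+ n) `^ p)^-1 * (d * (b * 2 ^+ n.+1) `^ (p - t)) =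
  2 `^ (p - t) * d * b `^ (- t) * (2 `^ (- t)) ^+ n.
Proof.
move=> b0; rewrite !powR_mul_exp2 ?(ltW b0)// !powRBD// !exprS !exprMn.
by field; rewrite expf_neq0 ?gt_eqF ?powR_gt0.
Qed.

Lemma sum_exp_le_gt1 q N : 1 < q -> \sum_(n < N) q ^+ n <= q ^+ N / (q - 1).
Proof.
move=> q1; rewrite ler_pdivlMr ?subr_gt0// mulrC -subrX1.
by rewrite lerBlDr lerDl.
Qed.

Lemma sum_exp_le_lt1 q N : 0 <= q < 1 -> \sum_(n < N) q ^+ n <= (1 - q)^-1.
Proof.
case/andP=> q0 q1; rewrite -div1r ler_pdivlMr ?subr_gt0//.
rewrite mulrC -opprB mulNr -subrX1 opprB lerBlDr lerDl exprn_ge0//.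
Qed.
End dyadic.

Section finite_bounds.
Variable R : realType.
Implicit Types (c d p s t u v : R) (N : nat).

Lemma ex_common_index (T : eqType) (L : seq T) (P : nat -> T -> Prop) :
  (forall i N M, (N <= M)%N -> P N i -> P M i) ->
  (forall i, i \in L -> exists N, P N i) -> exists N, forall i, i \in L -> P N i.
Proof.
move=> mono; elim: L => [|x L IH] h; first by exists 0%N.
have [N1 H1] := h x (mem_head _ _).
have [N2 H2] : exists N, forall i, i \in L -> P N i.
  by apply: IH => i iL; apply: h; rewrite inE iL orbT.
exists (maxn N1 N2) => i; rewrite inE => /orP[/eqP->|iL].
  by apply: mono H1; rewrite leq_maxl.
by apply: mono (H2 _ iL); rewrite leq_maxr.
Qed.

Lemma exists_lt_mul_exp2 u v : 0 < u -> exists N, v < u * 2 ^+ N.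
Proof.
move=> u0; have := archi_boundP (divr_ge0 (normr_ge0 v) (ltW u0)).
set N := Num.Def.archi_bound _ => vN; exists N.
rewrite (le_lt_trans (ler_norm v))// -ltr_pdivrMl// mulrC.
by rewrite (lt_trans vN)// -natrX ltr_nat ltn_expl.
Qed.

Lemma ler_mul_exp2 u N M : 0 <= u -> (N <= M)%N -> u * 2 ^+ N <= u * 2 ^+ M.
Proof. by move=> u0 NM; rewrite ler_wpM2l// ler_eXn2l// ltr1n. Qed.

Variables (T : eqType) (L : seq T) (mu y : T -> R).
Hypotheses (mu_ge0 : forall i, 0 <= mu i) (y_ge0 : forall i, 0 <= y i).

Lemma lower_sum_le t p c s : 0 < t -> t < p -> 0 <= c -> 0 < s ->
  (forall u, 0 < u -> \sum_(i <- L) (if u < y i then mu i else 0) <= c * u `^ (- t)) ->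
  \sum_(i <- L) (if s < y i then 0 else mu i * y i `^ p) <=
  2 `^ p / (2 `^ (p - t) - 1) * c * s `^ (p - t).
Proof.
move=> t0 tp c0 s0 tail_le; have p0 : 0 < p := lt_trans t0 tp.
have q1 : 1 < 2 `^ (p - t) by rewrite powR_gt1 ?ltr1n ?subr_gt0.
have [N sN] : exists N, forall i, i \in L -> 0 < y i -> s < y i * 2 ^+ N.
  apply: ex_common_index => [i N M NM sN yi|i _].
    exact: lt_le_trans (sN yi) (ler_mul_exp2 (y_ge0 i) NM).
  have [yi|yi] := ltP 0 (y i); last by exists 0%N.
  by have [N ?] := exists_lt_mul_exp2 s yi; exists N.
pose b := s / 2 ^+ N; have b0 : 0 < b by rewrite divr_gt0 ?exprn_gt0.
have -> : s = b * 2 ^+ N by rewrite divfK ?expf_neq0.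
apply: (@le_trans _ _ (\sum_(i <- L) \sum_(n < N)
    (b * 2 ^+ n.+1) `^ p * (if b * 2 ^+ n < y i then mu i else 0))).
  rewrite big_seq [leRHS]big_seq; apply: ler_sum => i iL.
  apply: lower_term_le_dyadic => // yi.
  by rewrite ltr_pdivrMr ?exprn_gt0 ?sN.
rewrite exchange_big /=.
apply: (@le_trans _ _ (\sum_(n < N)
    2 `^ p * c * b `^ (p - t) * (2 `^ (p - t)) ^+ n)).
  apply: ler_sum => n _; rewrite -mulr_sumr -dyadic_lower_termE//.
  by rewrite ler_wpM2l ?powR_ge0 ?tail_le ?mulr_gt0 ?exprn_gt0.
rewrite -mulr_sumr powR_mul_exp2 ?(ltW b0)//.
rewrite [leRHS](_ : _ = 2 `^ p * c * b `^ (p - t) *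
    (2 `^ (p - t) ^+ N / (2 `^ (p - t) - 1))); last first.
  by field; rewrite subr_eq0 gt_eqF.
by rewrite ler_wpM2l ?mulr_ge0 ?powR_ge0 ?sum_exp_le_gt1.
Qed.

Lemma tail_sum_le t p d s : 0 < t -> 0 <= p -> 0 <= d -> 0 < s ->
  (forall u, 0 < u ->
    \sum_(i <- L) (if u < y i then 0 else mu i * y i `^ p) <= d * u `^ (p - t)) ->
  \sum_(i <- L) (if s < y i then mu i else 0) <=
  2 `^ p / (2 `^ t - 1) * d * s `^ (- t).
Proof.
move=> t0 p0 d0 s0 lower_le.
have t1 : 1 < 2 `^ t by rewrite powR_gt1 ?ltr1n.
have q01 : 0 <= 2 `^ (- t) < 1.
  by rewrite powR_ge0 powRN invf_lt1 ?powR_gt0.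
have [N yN] : exists N, forall i, i \in L -> y i <= s * 2 ^+ N.
  apply: ex_common_index => [i N M NM yN|i _].
    exact: le_trans yN (ler_mul_exp2 (ltW s0) NM).
  by have [N /ltW] := exists_lt_mul_exp2 (y i) s0; exists N.
apply: (@le_trans _ _ (\sum_(i <- L) \sum_(n < N) ((s * 2 ^+ n) `^ p)^-1 *
    (if s * 2 ^+ n.+1 < y i then 0 else mu i * y i `^ p))).
  rewrite big_seq [leRHS]big_seq; apply: ler_sum => i iL.
  exact: tail_term_le_dyadic (yN i iL).
rewrite exchange_big /=.
apply: (@le_trans _ _ (\sum_(n < N)
    2 `^ (p - t) * d * s `^ (- t) * (2 `^ (- t)) ^+ n)).
  apply: ler_sum => n _; rewrite -mulr_sumr -dyadic_tail_termE//.
  by rewrite ler_wpM2l ?invr_ge0 ?powR_ge0 ?lower_le ?mulr_gt0 ?exprn_gt0.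
rewrite -mulr_sumr [leRHS](_ : _ = 2 `^ (p - t) * d * s `^ (- t) *
    (1 - 2 `^ (- t))^-1); last first.
  rewrite powRBD ?powRN//.
  by field; rewrite !subr_eq0 ?gt_eqF ?powR_gt0 // ?invf_neq1 ?lt_eqF.
by rewrite ler_wpM2l ?mulr_ge0 ?powR_ge0 ?sum_exp_le_lt1.
Qed.

End finite_bounds.

Lemma le_powR_of_root_le (R : realType) (c r k : R) (X : \bar R) :
  0 < c -> 0 < r -> (0 <= X)%E ->
  (c%:E * X `^ r^-1 <= k%:E)%E -> (X <= (k `^ r * c `^ (- r))%:E)%E.
Proof.
move=> c0 r0; case: X => [x| |] // x0.
- rewrite poweR_EFin -EFinM !lee_fin -ler_pdivlMl// => xk.
  have k0 : 0 <= k.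
    by move: (le_trans (powR_ge0 _ _) xk); rewrite pmulr_rge0 ?invr_gt0.
  have -> : x = (x `^ r^-1) `^ r by rewrite -powRrM mulVf ?gt_eqF// powRr1.
  rewrite -powR_invr ?(ltW c0)// -powRM ?invr_ge0 ?(ltW c0)// mulrC.
  apply: ge0_ler_powR xk;
    by rewrite ?nnegrE ?(ltW r0) ?powR_ge0 ?mulr_ge0 ?invr_ge0 ?(ltW c0).
- by rewrite poweRyr ?invr_neq0 ?gt_eqF// gt0_muley ?lte_fin// leye_eq.
Qed.

Section weak_norm.
Variables (R : realType) (I : choiceType) (mu y : I -> R).
Implicit Types (c d k p s t u : R).

Definition tail_mass (s : R) : \bar R :=
  \esum_(j in [set: I]) (if s < y j then mu j else 0)%:E.

Definition lower_moment (p s : R) : \bar R :=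
  \esum_(j in [set: I]) (if s < y j then 0 else mu j * y j `^ p)%:E.

Definition weak_norm (t : R) : \bar R :=
  ereal_sup [set (s%:E * tail_mass s `^ t^-1)%E | s in [set s : R | 0 < s]].

Definition moment_growth (t p : R) : \bar R :=
  ereal_sup [set ((s `^ ((t - p) / p))%:E * lower_moment p s `^ p^-1)%E
    | s in [set s : R | 0 < s]].

Lemma esum_le_of_seq (f : I -> R) (B : R) :
  (forall L : seq I, uniq L -> \sum_(i <- L) f i <= B) ->
  (\esum_(i in [set: I]) (f i)%:E <= B%:E)%E.
Proof.
move=> fB; apply: ge_ereal_sup => _ [X [finX _] <-].
by rewrite fsbig_finite// sumEFin lee_fin fB// fset_uniq.
Qed.

Lemma seq_le_esum (f : I -> R) (L : seq I) : uniq L ->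
  ((\sum_(i <- L) f i)%:E <= \esum_(i in [set: I]) (f i)%:E)%E.
Proof.
move=> uL; apply: esum_ge; exists [set` L]; first by split => //; exact: finite_seq.
by rewrite -sumEFin fsbig_seq.
Qed.

Hypotheses (mu_ge0 : forall i, 0 <= mu i) (y_ge0 : forall i, 0 <= y i).

Lemma tail_mass_ge0 s : (0 <= tail_mass s)%E.
Proof. by apply: esum_ge0 => i _; rewrite lee_fin; case: ifP. Qed.

Lemma lower_moment_ge0 p s : (0 <= lower_moment p s)%E.
Proof.
by apply: esum_ge0 => i _; rewrite lee_fin; case: ifP; rewrite ?mulr_ge0 ?powR_ge0.
Qed.

Lemma weak_norm_ge0 t : (0 <= weak_norm t)%E.
Proof.
apply: le_trans (ereal_sup_ubound _); last by exists 1 => //=.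
by rewrite mule_ge0 ?poweR_ge0.
Qed.

Lemma moment_growth_ge0 t p : (0 <= moment_growth t p)%E.
Proof.
apply: le_trans (ereal_sup_ubound _); last by exists 1 => //=.
by rewrite mule_ge0 ?poweR_ge0// lee_fin powR_ge0.
Qed.

Lemma lower_moment_le t p c s : 0 < t -> t < p -> 0 <= c -> 0 < s ->
  (forall u, 0 < u -> (tail_mass u <= (c * u `^ (- t))%:E)%E) ->
  (lower_moment p s <= (2 `^ p / (2 `^ (p - t) - 1) * c * s `^ (p - t))%:E)%E.
Proof.
move=> t0 tp c0 s0 tail_le; apply: esum_le_of_seq => L uL.
apply: lower_sum_le => // u u0; rewrite -lee_fin.
exact: le_trans (seq_le_esum _ uL) (tail_le u u0).
Qed.

Lemma tail_mass_le t p d s : 0 < t -> 0 <= p -> 0 <= d -> 0 < s ->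
  (forall u, 0 < u -> (lower_moment p u <= (d * u `^ (p - t))%:E)%E) ->
  (tail_mass s <= (2 `^ p / (2 `^ t - 1) * d * s `^ (- t))%:E)%E.
Proof.
move=> t0 p0 d0 s0 lower_le; apply: esum_le_of_seq => L uL.
apply: tail_sum_le => // u u0; rewrite -lee_fin.
exact: le_trans (seq_le_esum _ uL) (lower_le u u0).
Qed.

Lemma moment_growth_le_weak_norm t p : 0 < t -> t < p ->
  (moment_growth t p <=
   (2 * (2 `^ (p - t) - 1) `^ (- p^-1))%:E * weak_norm t `^ (t / p))%E.
Proof.
move=> t0 tp; have p0 : 0 < p := lt_trans t0 tp.
have d0 : 0 <= 2 `^ (p - t) - 1.
  by rewrite subr_ge0 ltW// powR_gt1 ?ltr1n ?subr_gt0.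
have dV0 : 0 <= (2 `^ (p - t) - 1)^-1 by rewrite invr_ge0.
have C0 : 0 < 2 * (2 `^ (p - t) - 1) `^ (- p^-1).
  by rewrite mulr_gt0 ?powR_gt0// subr_gt0 powR_gt1 ?ltr1n ?subr_gt0.
have := weak_norm_ge0 t; case E: (weak_norm t) => [k| |] // k0; last first.
  by rewrite poweRyr ?mulf_neq0 ?gt_eqF ?invr_gt0// gt0_muley ?lte_fin// leey.
rewrite lee_fin in k0.
have tail_le u : 0 < u -> (tail_mass u <= (k `^ t * u `^ (- t))%:E)%E.
  move=> u0; apply: le_powR_of_root_le => //; first exact: tail_mass_ge0.
  by rewrite -E; apply: ereal_sup_ubound; exists u.
rewrite poweR_EFin -EFinM; apply: ge_ereal_sup => _ [s /= s0 <-].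
have lower_le := lower_moment_le t0 tp (powR_ge0 k t) s0 tail_le.
set B := 2 `^ p / (2 `^ (p - t) - 1) * k `^ t in lower_le.
have B0 : 0 <= B by rewrite !mulr_ge0 ?powR_ge0.
have root_le : (lower_moment p s `^ p^-1 <= ((B * s `^ (p - t)) `^ p^-1)%:E)%E.
  rewrite -poweR_EFin; apply: gt0_ler_poweR lower_le.
  - by rewrite invr_ge0 ltW.
  - by rewrite in_itv/= leey andbT lower_moment_ge0.
  - by rewrite in_itv/= leey andbT lee_fin mulr_ge0 ?powR_ge0.
apply: le_trans (lee_wpmul2l _ root_le) _; first by rewrite lee_fin powR_ge0.
rewrite -EFinM lee_fin powR_scale_free ?mulr_ge0 ?divr_ge0 ?powR_ge0 ?gt_eqF//;
  last by rewrite mulfVK ?gt_eqF// opprB.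
rewrite powRM ?divr_ge0 ?invr_ge0 ?powR_ge0// powR_div_root ?powR_ge0//.
by rewrite divff ?gt_eqF// powRr1// -powRrM.
Qed.

Lemma weak_norm_le_moment_growth t p : 0 < t -> t < p ->
  (weak_norm t <=
   (2 `^ (p / t) * (2 `^ t - 1) `^ (- t^-1))%:E * moment_growth t p `^ (p / t))%E.
Proof.
move=> t0 tp; have p0 : 0 < p := lt_trans t0 tp.
have d0 : 0 <= 2 `^ t - 1 by rewrite subr_ge0 ltW// powR_gt1 ?ltr1n.
have dV0 : 0 <= (2 `^ t - 1)^-1 by rewrite invr_ge0.
have C0 : 0 < 2 `^ (p / t) * (2 `^ t - 1) `^ (- t^-1).
  by rewrite mulr_gt0 ?powR_gt0// subr_gt0 powR_gt1 ?ltr1n.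
have := moment_growth_ge0 t p; case E: (moment_growth t p) => [g| |] // g0; last first.
  by rewrite poweRyr ?mulf_neq0 ?gt_eqF ?invr_gt0// gt0_muley ?lte_fin// leey.
rewrite lee_fin in g0.
have lower_le u : 0 < u -> (lower_moment p u <= (g `^ p * u `^ (p - t))%:E)%E.
  move=> u0; have := le_powR_of_root_le (k := g) (powR_gt0 ((t - p) / p) u0) p0
    (lower_moment_ge0 p u).
  rewrite -powRrM (_ : (t - p) / p * - p = p - t); last first.
    by rewrite mulrN mulfVK ?gt_eqF// opprB.
  by apply; rewrite -E; apply: ereal_sup_ubound; exists u.
rewrite poweR_EFin -EFinM; apply: ge_ereal_sup => _ [s /= s0 <-].
have tail_le := tail_mass_le t0 (ltW p0) (powR_ge0 g p) s0 lower_le.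
set B := 2 `^ p / (2 `^ t - 1) * g `^ p in tail_le.
have B0 : 0 <= B by rewrite !mulr_ge0 ?powR_ge0.
have root_le : (tail_mass s `^ t^-1 <= ((B * s `^ (- t)) `^ t^-1)%:E)%E.
  rewrite -poweR_EFin; apply: gt0_ler_poweR tail_le.
  - by rewrite invr_ge0 ltW.
  - by rewrite in_itv/= leey andbT tail_mass_ge0.
  - by rewrite in_itv/= leey andbT lee_fin mulr_ge0 ?powR_ge0.
apply: le_trans (lee_wpmul2l _ root_le) _; first by rewrite lee_fin ltW.
rewrite -EFinM lee_fin -{1}(powRr1 (ltW s0)).
rewrite powR_scale_free ?mulr_ge0 ?divr_ge0 ?powR_ge0 ?gt_eqF//;
  last by rewrite mul1r opprK.
by rewrite powRM ?divr_ge0 ?invr_ge0 ?powR_ge0// powR_div_root ?powR_ge0// -powRrM.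
Qed.

End weak_norm.

Definition kt_weight (I : Type) (R : realType) (a r : I -> R) (j : I) : R :=
  (a j)^-2 * r j ^+ 2.

Definition kt_level (I : Type) (R : realType) (a r x : I -> R) (j : I) : R :=
  `|x j| / ((a j)^-2 * r j).

Lemma kt_weight_ge0 (I : Type) (R : realType) (a r : I -> R) j :
  0 <= kt_weight a r j.
Proof. by apply: mulr_ge0; rewrite ?invr_ge0 sqr_ge0. Qed.

Section thresholding.
Variables (I : countType) (R : realType) (a r : I -> R).
Hypotheses (a_gt0 : forall j, 0 < a j) (r_gt0 : forall j, 0 < r j).

Lemma threshold_gt0 j : 0 < (a j)^-2 * r j.
Proof. by rewrite mulr_gt0 ?invr_gt0 ?exprn_gt0. Qed.

Lemma kt_level_ge0 x j : 0 <= kt_level a r x j.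
Proof. exact: divr_ge0 (normr_ge0 _) (ltW (threshold_gt0 j)). Qed.

Lemma aboveE s x j : above a r s x j = (s < kt_level a r x j).
Proof. by rewrite /above /kt_level ltr_pdivlMr ?threshold_gt0// mulrC. Qed.

Lemma kt_norm_weak_norm t x :
  kt_norm a r t x = weak_norm (kt_weight a r) (kt_level a r x) t.
Proof.
rewrite /kt_norm /weak_norm; congr ereal_sup; apply: eq_imagel => s _.
congr (_ * _ `^ _)%E; rewrite /tail_mass esum_mkcond; apply: eq_esum => j _.
rewrite mem_setE unfold_in -[X in if X then _ else _]/(above a r s x j).
by rewrite aboveE; case: ifP.
Qed.

Lemma omega_bar_powR p x j : 0 < p ->
  omega_bar a r p j `^ p * `|x j| `^ p = kt_weight a r j * kt_level a r x j `^ p.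
Proof.
move=> p0; have a0 := a_gt0 j; have r0 := r_gt0 j.
rewrite /omega_bar /kt_weight /kt_level -powRrM mulVf ?gt_eqF//.
rewrite powRr1 ?mulr_ge0 ?powR_ge0//.
rewrite -!powR_invn ?(ltW a0)// -powR_mulrn ?(ltW r0)//.
rewrite powRM ?invr_ge0 ?mulr_ge0 ?powR_ge0 ?(ltW r0)//.
rewrite powR_invr ?mulr_ge0 ?powR_ge0 ?(ltW r0)//.
rewrite powRM ?powR_ge0 ?(ltW r0)// -powRrM !powRBD// mulrNN.
ring.
Qed.

Lemma gamma_fun_moment_growth t p x : 0 < p ->
  gamma_fun a r t p x = moment_growth (kt_weight a r) (kt_level a r x) t p.
Proof.
move=> p0; rewrite /gamma_fun /moment_growth /wnorm; congr ereal_sup.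
apply: eq_imagel => s _; congr (_ * _ `^ _)%E; apply: eq_esum => j _.
rewrite /thresh aboveE; case: ifP => _; last by rewrite subr0 omega_bar_powR.
by rewrite subrr normr0 powR0 ?gt_eqF// mulr0.
Qed.

End thresholding.

Theorem lemma3p6 (I : countType) (R : realType) (a r : I -> R)
  (ha : forall j, 0 < a j) (hr : forall j, 0 < r j)
  (t p : R) (ht : 0 < t) (htp : t < p) (hp2 : p <= 2) (x : I -> R) :
  (kt a r t x <-> (gamma_fun a r t p x < +oo)%E) /\
  (gamma_fun a r t p x <=
     (2 * (2 `^ (p - t) - 1) `^ (- p^-1))%:E * kt_norm a r t x `^ (t / p))%E /\
  (kt_norm a r t x <=
     (2 `^ (p / t) * (2 `^ t - 1) `^ (- t^-1))%:E * gamma_fun a r t p x `^ (p / t))%E.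
Proof.
have p0 : 0 < p := lt_trans ht htp.
have -> : kt a r t x = (kt_norm a r t x < +oo)%E by [].
rewrite kt_norm_weak_norm// gamma_fun_moment_growth//.
have w0 := kt_weight_ge0 a r; have l0 := kt_level_ge0 ha hr x.
have upper := moment_growth_le_weak_norm w0 l0 ht htp.
have lower := weak_norm_le_moment_growth (kt_level a r x) w0 ht htp.
split; last exact: conj upper lower.
split=> finite.
- apply: le_lt_trans upper _; apply: lte_mul_pinfty => //; last exact: poweR_lty.
  by rewrite lee_fin mulr_ge0 ?powR_ge0.
- apply: le_lt_trans lower _; apply: lte_mul_pinfty => //; last exact: poweR_lty.
  by rewrite lee_fin mulr_ge0 ?powR_ge0.
Qed.
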